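(* Fix $0<p<1$ and real numbers $L<U$ (not necessarily integers, and without requiring $U-L\ge 4$). With the notation of the context, for every real $x\in[L,U]$ there exist $\alpha(x),\beta(x)\in[0,1]$ with $\alpha(x)=\lim_{k\to\infty}\alpha_k(x)$ and $\beta(x)=\lim_{k\to\infty}\beta_k(x)$, and moreover $\alpha(x)+\beta(x)=1$.
   Context: Let $\xi_1,\xi_2,\dots$ be i.i.d. random variables with values in $\{1,-1\}$, $\mathbb{P}(\xi_i=1)=p$, $\mathbb{P}(\xi_i=-1)=q:=1-p$. Define $X_k=-1$ if $\xi_k=-1$; $X_k=2$ if $\xi_k=\xi_{k-1}=1$ (for $k\ge 2$); and $X_k=1$ otherwise (in particular $X_1=1$ when $\xi_1=1$). Let $S_0=0$, $S_k=X_1+\dots+X_k$, and $S^x_k=x+S_k$. For $k\ge 0$ let $\tau^x_k=\min\{l\in\{0,\dots,k\}: S^x_l\le L \text{ or } S^x_l\ge U\}$ if this set is nonempty, and $\tau^x_k=k$ otherwise. Let $\alpha_k(x)=\mathbb{P}\big(\bigcup_{l=0}^k\{\tau^x_k=l,\ S^x_l\le L\}\big)$ and $\beta_k(x)=\mathbb{P}\big(\bigcup_{l=0}^k\{\tau^x_k=l,\ S^x_l\ge U\}\big)$. *)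

From HB Require Import structures.
From mathcomp Require Import all_boot all_order all_algebra.
From mathcomp Require Import all_classical all_reals topology normedtype sequences.
Set Implicit Arguments. Unset Strict Implicit. Unset Printing Implicit Defensive.
Import Order.TTheory GRing.Theory Num.Theory.
Local Open Scope ring_scope.

Section Walk.
Variable R : realType.

(* A sample path: [s (k-1) = true] encodes xi_k = 1, [false] encodes xi_k = -1
   (indices shifted so that xi_1 is s 0). *)

Definition Xstep (s : nat -> bool) (k : nat) : R :=
  if ~~ s k.-1 then -1
  else if (1 < k)%N && s k.-2 then 2 else 1.

Definition Spart (s : nat -> bool) (k : nat) : R :=
  \sum_(1 <= i < k.+1) Xstep s i.

Definition exited (L U x : R) (s : nat -> bool) (l : nat) : bool :=
  (x + Spart s l <= L) || (U <= x + Spart s l).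

(* tau^x_k : the least l in {0..k} with S^x_l <= L or S^x_l >= U, and k if none *)
Definition tau (L U x : R) (s : nat -> bool) (k : nat) : nat :=
  minn (find (exited L U x s) (iota 0 k.+1)) k.

Definition low_event (L U x : R) (s : nat -> bool) (k : nat) : bool :=
  [exists l : 'I_k.+1, (tau L U x s k == l) && (x + Spart s l <= L)].

Definition up_event (L U x : R) (s : nat -> bool) (k : nat) : bool :=
  [exists l : 'I_k.+1, (tau L U x s k == l) && (U <= x + Spart s l)].

(* The events for index k depend only on xi_1..xi_k; we extend a finite
   outcome w (w i = xi_{i+1}) arbitrarily beyond k. *)
Definition ext (k : nat) (w : {ffun 'I_k -> bool}) : nat -> bool :=
  fun i => if insub i is Some j then w j else false.

Definition weight (p : R) (k : nat) (w : {ffun 'I_k -> bool}) : R :=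
  \prod_(i < k) (if w i then p else 1 - p).

Definition prob_k (p : R) (k : nat) (E : (nat -> bool) -> bool) : R :=
  \sum_(w : {ffun 'I_k -> bool}) weight p w * (E (ext w))%:R.

Definition alpha (p L U x : R) (k : nat) : R := prob_k p k (fun s => low_event L U x s k).
Definition beta  (p L U x : R) (k : nat) : R := prob_k p k (fun s => up_event L U x s k).

End Walk.

From HB Require Import structures.
From mathcomp Require Import all_boot all_order all_algebra.
From mathcomp Require Import all_classical all_reals topology normedtype sequences.
From mathcomp Require Import lra.
Import Order.TTheory GRing.Theory Num.Theory numFieldNormedType.Exports.
Local Open Scope ring_scope.
Local Open Scope classical_set_scope.
Set Implicit Arguments. Unset Strict Implicit. Unset Printing Implicit Defensive.

(* Every step X_k is at least 1 when xi_k = 1, so a run of m >= U - L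
   consecutive up-steps forces the walk out of (L, U).  Cutting time into
   blocks of length m, the probability of not having exited by time j m is
   therefore at most (1 - p^m)^j, by independence of the blocks.  Hence the
   walk exits almost surely, alpha_k + beta_k = 1 - P(no exit by k) tends to
   1, and alpha_k, being nondecreasing and bounded, converges. *)

Lemma nonincreasing_geometric_cvg0 (R : realType) (u : R^nat) (q : R) (m : nat) :
  nonincreasing_seq u -> (forall n, 0 <= u n) -> `|q| < 1 ->
  (forall j, u (j * m)%N <= q ^+ j) -> u @ \oo --> 0.
Proof.
move=> u_noninc u_ge0 q_lt1 u_geometric.
have u_cvg : cvgn u by apply: nonincreasing_is_cvgn => //; exists 0 => _ [n _ <-].
suff <- : limn u = 0 by [].
apply/eqP; rewrite eq_le limr_ge ?andbT //; last by near=> n.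
have q_cvg : (GRing.exp q : R^nat) @ \oo --> 0 by apply: cvg_expr.
rewrite -(cvg_lim _ q_cvg) //; apply: limr_ge; first exact: cvgP q_cvg.
by near=> j; apply: le_trans (u_geometric j); exact: nonincreasing_cvgn_ge.
Unshelve. all: by end_near.
Qed.

Section FiniteProduct.
Variable R : realType.
Variable p : R.

Definition depends_on k (E : (nat -> bool) -> bool) :=
  forall s t, (forall i, (i < k)%N -> s i = t i) -> E s = E t.

Lemma ext_ord k (w : {ffun 'I_k -> bool}) i (lt_ik : (i < k)%N) :
  ext w i = w (Ordinal lt_ik).
Proof. by rewrite /ext insubT. Qed.

Lemma sum_weight k : \sum_(w : {ffun 'I_k -> bool}) weight p w = 1.
Proof.
rewrite /weight -(bigA_distr_bigA (fun (_ : 'I_k) (b : bool) => if b then p else 1 - p)).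
by apply: big1 => i _; rewrite big_bool /= addrC subrK.
Qed.

Lemma eq_prob_k k (E F : (nat -> bool) -> bool) : E =1 F -> prob_k p k E = prob_k p k F.
Proof. by move=> eEF; apply: eq_bigr => w _; rewrite eEF. Qed.

Lemma prob_k_true k : prob_k p k (fun _ => true) = 1.
Proof. by rewrite -[RHS](sum_weight k); apply: eq_bigr => w _; rewrite mulr1. Qed.

Lemma prob_k_disjointU k (E F : (nat -> bool) -> bool) : (forall s, ~~ (E s && F s)) ->
  prob_k p k (fun s => E s || F s) = prob_k p k E + prob_k p k F.
Proof.
move=> dEF; rewrite /prob_k -big_split; apply: eq_bigr => w _ /=.
by rewrite -mulrDr; move: (dEF (ext w)); case: (E _); case: (F _); rewrite /= ?addr0 ?add0r.
Qed.

Lemma prob_kC k E : prob_k p k (fun s => ~~ E s) = 1 - prob_k p k E.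
Proof.
apply/eqP; rewrite eq_sym subr_eq -(prob_k_true k) addrC -prob_k_disjointU.
  by apply/eqP/eq_prob_k => s; case: (E s).
by move=> s; case: (E s).
Qed.

Definition ffun_cat k m (gh : {ffun 'I_k -> bool} * {ffun 'I_m -> bool}) :
    {ffun 'I_(k + m) -> bool} :=
  [ffun i => match fintype.split i with inl a => gh.1 a | inr b => gh.2 b end].

Definition ffun_split k m (f : {ffun 'I_(k + m) -> bool}) :
    {ffun 'I_k -> bool} * {ffun 'I_m -> bool} :=
  ([ffun a => f (lshift m a)], [ffun b => f (rshift k b)]).

Lemma ffun_catK k m : cancel (@ffun_cat k m) (@ffun_split k m).
Proof.
case=> g h; congr pair; apply/ffunP => i; rewrite !ffunE.
  by rewrite (unsplitK (inl _ i)).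
by rewrite (unsplitK (inr _ i)).
Qed.

Lemma ffun_splitK k m : cancel (@ffun_split k m) (@ffun_cat k m).
Proof. by move=> f; apply/ffunP => i; rewrite ffunE; case: split_ordP => j ->; rewrite ffunE. Qed.

Lemma ext_ffun_cat_lshift k m g h i : (i < k)%N -> ext (@ffun_cat k m (g, h)) i = ext g i.
Proof.
move=> lt_ik; rewrite (ext_ord _ lt_ik) ext_ord ?(leq_trans lt_ik (leq_addr _ _)) // => lt_ikm.
have -> : Ordinal lt_ikm = lshift m (Ordinal lt_ik) by apply: val_inj.
by rewrite ffunE (unsplitK (inl _ _)).
Qed.

Lemma ext_ffun_cat_rshift k m g h i : (i < m)%N -> ext (@ffun_cat k m (g, h)) (k + i) = ext h i.
Proof.
move=> lt_im; rewrite (ext_ord _ lt_im) ext_ord ?ltn_add2l // => lt_kim.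
have -> : Ordinal lt_kim = rshift k (Ordinal lt_im) by apply: val_inj.
by rewrite ffunE (unsplitK (inr _ _)).
Qed.

Lemma weight_ffun_cat k m g h : weight p (@ffun_cat k m (g, h)) = weight p g * weight p h.
Proof.
rewrite /weight big_split_ord; congr (_ * _); apply: eq_bigr => i _; rewrite ffunE.
  by rewrite (unsplitK (inl _ _)).
by rewrite (unsplitK (inr _ _)).
Qed.

Lemma prob_k_indep k m (A B : (nat -> bool) -> bool) : depends_on k A -> depends_on m B ->
  prob_k p (k + m) (fun s => A s && B (fun i => s (k + i)%N)) = prob_k p k A * prob_k p m B.
Proof.
move=> dA dB; rewrite /prob_k (reindex (@ffun_cat k m)); last first.
  by exists (@ffun_split k m) => f _; [exact: ffun_catK | exact: ffun_splitK].
rewrite big_distrl (eq_bigr _ (fun g _ => big_distrr _ _ _)) pair_bigA.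
apply: eq_bigr => -[g h] _ /=; rewrite weight_ffun_cat.
rewrite (dA _ (ext g)); last exact: ext_ffun_cat_lshift.
rewrite (dB _ (ext h)); last exact: ext_ffun_cat_rshift.
by rewrite mulrACA -natrM mulnb.
Qed.

Lemma prob_k_widen k m A : depends_on k A -> prob_k p (k + m) A = prob_k p k A.
Proof.
move=> dA; rewrite -[RHS]mulr1 -(prob_k_true m) -prob_k_indep //.
by apply: eq_prob_k => s; rewrite andbT.
Qed.

Lemma prob_k_all_true m : prob_k p m (fun t => [forall i : 'I_m, t i]) = p ^+ m.
Proof.
have all_true (w : {ffun 'I_m -> bool}) : [forall i : 'I_m, ext w i] = (w == [ffun=> true]).
  apply/forallP/eqP => [w_true | ->] /=; last by move=> i; rewrite ext_ord ffunE.
  apply/ffunP => i; rewrite ffunE; move: (w_true i); rewrite ext_ord.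
  by congr is_true; congr (w _); apply: val_inj.
rewrite /prob_k (bigD1 [ffun=> true]) //= big1 => [|w /negPf w_nt]; last by rewrite all_true w_nt mulr0.
rewrite all_true eqxx mulr1 addr0 /weight (eq_bigr (fun _ => p)) => [|i _]; last by rewrite ffunE.
by rewrite prodr_const card_ord.
Qed.

Hypotheses (p_ge0 : 0 <= p) (p_le1 : p <= 1).

Lemma weight_ge0 k (w : {ffun 'I_k -> bool}) : 0 <= weight p w.
Proof. by apply: prodr_ge0 => i _; case: (w i); rewrite ?subr_ge0. Qed.

Lemma prob_k_ge0 k E : 0 <= prob_k p k E.
Proof. by apply: sumr_ge0 => w _; rewrite mulr_ge0 ?weight_ge0. Qed.

Lemma le_prob_k k (E F : (nat -> bool) -> bool) : (forall s, E s -> F s) ->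
  prob_k p k E <= prob_k p k F.
Proof.
move=> sEF; apply: ler_sum => w _; rewrite ler_wpM2l ?weight_ge0 //.
by case: (boolP (E _)) => [/sEF -> | _].
Qed.

Lemma prob_k_le1 k E : prob_k p k E <= 1.
Proof. by rewrite -(prob_k_true k); apply: le_prob_k. Qed.

End FiniteProduct.

Section Walk.
Variable R : realType.
Variables L U x : R.

Definition no_exit k (s : nat -> bool) := ~~ [exists l : 'I_k.+1, exited L U x s l].

Section Locality.
Variables (k : nat) (s t : nat -> bool).
Hypothesis eq_st : forall i, (i < k)%N -> s i = t i.

Lemma Spart_local l : (l <= k)%N -> Spart R s l = Spart R t l.
Proof.
move=> le_lk; apply: eq_big_nat => i /andP [i_gt0 le_il].
have lt_i1k : (i.-1 < k)%N by rewrite (leq_trans _ le_lk) // prednK.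
have lt_i2k : (i.-2 < k)%N by apply: leq_ltn_trans lt_i1k; exact: leq_pred.
by rewrite /Xstep !eq_st.
Qed.

Lemma exited_local l : (l <= k)%N -> exited L U x s l = exited L U x t l.
Proof. by move=> le_lk; rewrite /exited Spart_local. Qed.

Lemma tau_local : tau L U x s k = tau L U x t k.
Proof.
congr minn; apply: eq_in_find => l; rewrite mem_iota ltnS => /andP [_].
exact: exited_local.
Qed.

End Locality.

Lemma low_event_depends k : depends_on k (fun s => low_event L U x s k).
Proof.
move=> s t eq_st; apply: eq_existsb => l.
by rewrite (tau_local eq_st) (Spart_local eq_st) // -ltnS.
Qed.

Lemma no_exit_depends k : depends_on k (no_exit k).
Proof.
move=> s t eq_st; congr negb; apply: eq_existsb => l.
by rewrite (exited_local eq_st) // -ltnS.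
Qed.

Lemma tau_exited k s : [exists l : 'I_k.+1, exited L U x s l] ->
  [/\ exited L U x s (tau L U x s k), (tau L U x s k <= k)%N &
      forall n, (k <= n)%N -> tau L U x s n = tau L U x s k].
Proof.
move=> /existsP [l ex_l].
have has_ex : has (exited L U x s) (iota 0 k.+1).
  by apply/hasP; exists (val l) => //; rewrite mem_iota ltn_ord.
have lt_find := has_ex; rewrite has_find size_iota in lt_find.
have tau_find : tau L U x s k = find (exited L U x s) (iota 0 k.+1).
  by apply/minn_idPl; rewrite -ltnS.
split; rewrite tau_find.
- by have := nth_find 0 has_ex; rewrite nth_iota.
- by rewrite -ltnS.
move=> n le_kn; rewrite /tau -(subnKC le_kn) -addSn iotaD find_cat has_ex.
by apply/minn_idPl; rewrite -ltnS (leq_trans lt_find) // ltnS leq_addr.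
Qed.

Lemma low_or_up_event k s : low_event L U x s k || up_event L U x s k = ~~ no_exit k s.
Proof.
rewrite negbK; apply/idP/idP.
  by case/orP => /existsP [l /andP [_ ex_l]]; apply/existsP; exists l; rewrite /exited ex_l ?orbT.
move=> /tau_exited [ex_tau le_tau _]; have lt_tau : (tau L U x s k < k.+1)%N by [].
by case/orP: ex_tau => ex; apply/orP; [left | right];
  apply/existsP; exists (Ordinal lt_tau); rewrite eqxx.
Qed.

Lemma low_eventS k s : low_event L U x s k -> low_event L U x s k.+1.
Proof.
move=> low; have [|_ _ tau_stable] := tau_exited (k := k) (s := s).
  by move: (low_or_up_event k s); rewrite low /no_exit negbK.
case/existsP: low => l /andP [/eqP tau_l low_l]; apply/existsP.
by exists (widen_ord (leqnSn _) l); rewrite low_l tau_stable // tau_l eqxx.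
Qed.

Lemma no_exit_leq k n s : (k <= n)%N -> no_exit n s -> no_exit k s.
Proof.
move=> le_kn; apply: contra => /existsP [l ex_l]; apply/existsP.
by exists (widen_ord (le_kn : (k.+1 <= n.+1)%N) l).
Qed.

Lemma SpartS (s : nat -> bool) n : Spart R s n.+1 = Spart R s n + Xstep R s n.+1.
Proof. by rewrite /Spart big_nat_recr. Qed.

Lemma Spart_run_ge (s : nat -> bool) a m : (forall i, (i < m)%N -> s (a + i)%N) ->
  Spart R s a + m%:R <= Spart R s (a + m).
Proof.
elim: m => [|m IHm] run; first by rewrite addn0 addr0.
rewrite addnS SpartS mulrSr addrA lerD //.
  by apply: IHm => i lt_im; apply: run; rewrite ltnS ltnW.
rewrite /Xstep /= run //; case: ifP => _ //; exact: ler1n.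
Qed.

Lemma no_exit_run a m s : U - L <= m%:R -> no_exit (a + m) s ->
  ~~ [forall i : 'I_m, s (a + i)%N].
Proof.
move=> le_UL_m no_ex; apply/negP => /forallP run.
have le_run : Spart R s a + m%:R <= Spart R s (a + m).
  by apply: Spart_run_ge => i lt_im; exact: (run (Ordinal lt_im)).
have : ~~ exited L U x s a.
  apply: contra no_ex => ex_a; apply/existsP.
  by exists (Ordinal (leq_addr _ _ : (a < (a + m).+1)%N)).
rewrite /exited negb_or -!ltNge => /andP [gt_L _].
move/negP: no_ex; apply; apply/existsP; exists ord_max; apply/orP; right => /=.
lra.
Qed.

Hypothesis ltLU : L < U.

Lemma low_up_event_disjoint k s : ~~ (low_event L U x s k && up_event L U x s k).
Proof.
apply/negP => /andP [/existsP [l1 /andP [/eqP tau_l1 low]] /existsP [l2 /andP [/eqP tau_l2 up]]].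
have /val_inj l12 : l1 = l2 :> nat by rewrite -tau_l1 -tau_l2.
by move: low; rewrite l12 => /(le_trans up); rewrite leNgt ltLU.
Qed.

End Walk.

Section ExitProbability.
Variable R : realType.
Variables p L U x : R.
Hypotheses (p_gt0 : 0 < p) (p_le1 : p <= 1) (ltLU : L < U).

Let p_ge0 : 0 <= p. Proof. exact: ltW. Qed.

Local Notation P k := (prob_k p k (no_exit L U x k)).

Lemma alpha_beta_sum k : alpha p L U x k + beta p L U x k = 1 - P k.
Proof.
rewrite -prob_k_disjointU; last exact: low_up_event_disjoint.
by rewrite -prob_kC; apply: eq_prob_k => s; rewrite low_or_up_event.
Qed.

Lemma alpha_nondecreasing : nondecreasing_seq (alpha p L U x).
Proof.
apply/nondecreasing_seqP => k.
rewrite /alpha -[X in X <= _](prob_k_widen _ 1 (@low_event_depends _ L U x k)) addn1.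
by apply: le_prob_k => //; exact: low_eventS.
Qed.

Lemma no_exit_prob_nonincreasing : nonincreasing_seq (fun k => P k).
Proof.
apply/nonincreasing_seqP => k.
rewrite -[X in _ <= X](prob_k_widen _ 1 (@no_exit_depends _ L U x k)) addn1.
by apply: le_prob_k => // s; apply: no_exit_leq.
Qed.

Lemma no_exit_prob_block a m : U - L <= m%:R -> P (a + m)%N <= P a * (1 - p ^+ m).
Proof.
move=> le_UL_m.
have run_depends : depends_on m (fun t => ~~ [forall i : 'I_m, t i]).
  by move=> s t eq_st; congr negb; apply: eq_forallb => i; rewrite eq_st.
rewrite -prob_k_all_true -prob_kC -prob_k_indep //; last exact: no_exit_depends.
apply: le_prob_k => // s no_ex; rewrite (no_exit_leq (leq_addr m a) no_ex).
exact: no_exit_run no_ex.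
Qed.

Lemma no_exit_prob_cvg0 : P n @[n --> \oo] --> 0.
Proof.
pose m := Num.bound (U - L); pose q := 1 - p ^+ m.
have le_UL_m : U - L <= m%:R by apply/ltW/archi_boundP; rewrite subr_ge0 ltW.
have q_ge0 : 0 <= q by rewrite subr_ge0 exprn_ile1.
have q_lt1 : q < 1 by rewrite ltrBlDr ltrDl exprn_gt0.
have P_geometric j : P (j * m)%N <= q ^+ j.
  elim: j => [|j IHj]; first by rewrite expr0 prob_k_le1.
  rewrite mulSnr exprSr (le_trans (no_exit_prob_block _ le_UL_m)) // ler_wpM2r //.
apply: nonincreasing_geometric_cvg0 P_geometric.
- exact: no_exit_prob_nonincreasing.
- by move=> n; apply: prob_k_ge0.
- by rewrite ger0_norm.
Qed.

End ExitProbability.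

Theorem corollary2p5 (R : realType) (p L U : R) :
  0 < p < 1 -> L < U ->
  forall x : R, L <= x <= U ->
  exists a b : R,
    [/\ 0 <= a <= 1, 0 <= b <= 1,
        alpha p L U x n @[n --> \oo] --> a,
        beta p L U x n @[n --> \oo] --> b
      & a + b = 1].
Proof.
move=> /andP [p_gt0 p_lt1] ltLU x _.
have [p_ge0 p_le1] := (ltW p_gt0, ltW p_lt1).
have alpha_bounds n : 0 <= alpha p L U x n <= 1 by rewrite prob_k_ge0 ?prob_k_le1.
have alpha_cvg : cvgn (alpha p L U x).
  apply: nondecreasing_is_cvgn; first exact: alpha_nondecreasing.
  by exists 1 => _ [n _ <-]; case/andP: (alpha_bounds n).
set a := limn (alpha p L U x).
have a_bounds : 0 <= a <= 1.
  by rewrite limr_ge ?limr_le //; near=> n; case/andP: (alpha_bounds n).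
exists a, (1 - a); split => //; last by rewrite addrC subrK.
  by rewrite subr_ge0 lerBlDr lerDl; case/andP: a_bounds => -> ->.
have -> : beta p L U x = fun k => 1 - prob_k p k (no_exit L U x k) - alpha p L U x k.
  by apply: funext => k; rewrite -alpha_beta_sum // addrAC subrr add0r.
rewrite -[X in _ --> X - _]subr0.
by apply: cvgB => //; apply: cvgB; [exact: cvg_cst | exact: no_exit_prob_cvg0].
Unshelve. all: by end_near.
Qed.
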